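(* Assume Assumption 1. Assume there is a constant $L>0$ such that for every $T^Y_0\in\mathbb{T}^Y_0$ and all $(x_1,y_1),(x_2,y_2)\in\mathcal{X}_T\times\mathcal{Y}_S$, $$\|T^Y_0(x_1,y_1)-T^Y_0(x_2,y_2)\|_{\mathcal{Y}_T}\le L\big(\|x_1-x_2\|_{\mathcal{X}_T}+\|y_1-y_2\|_{\mathcal{Y}_S}\big).$$ Assume also there are $L'>0$ and $p\ge1$ such that the output transport risk satisfies $$|\mathcal{E}^O(h_1)-\mathcal{E}^O(h_2)|\le L'\,\mathcal{W}_p\big(h_1\#Law(X_T),h_2\#Law(X_T)\big)^p$$ for all intermediate models $h_1,h_2$ (arising from any pretrained models in $A_S$). Then for every fixed $\mu\in\mathcal{P}(\mathcal{X}_S)$, the map $f\mapsto\mathcal{C}(\mu,f)$ is continuous on $(A_S,d_M)$.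
   Context: Transfer learning framework. A source task $S$ consists of an input space $\mathcal{X}_S$ and output space $\mathcal{Y}_S$ (finite-dimensional normed spaces), a random pair $(X_S,Y_S)$, a set $A_S$ of admissible models $f:\mathcal{X}_S\to\mathcal{Y}_S$ and a pretrained model $f_S^*\in A_S$. A target task $T$ has analogous $\mathcal{X}_T,\mathcal{Y}_T,(X_T,Y_T),A_T$ and optimal target model $f_T^*$. Fixed sets $\mathbb{T}^X_0$ of maps $\mathcal{X}_T\to\mathcal{X}_S$ and $\mathbb{T}^Y_0$ of maps $\mathcal{X}_T\times\mathcal{Y}_S\to\mathcal{Y}_T$ are given. For $(T^X_0,T^Y_0)$ the intermediate model is $f_{ST}(x)=T^Y_0(x,f_S^*(T^X_0(x)))$; $\mathbb{P}_T=Law(f_T^*(X_T))$, $\mathbb{P}_{ST}=Law(f_{ST}(X_T))$. An output transport risk is $\mathcal{E}^O:A_T\to\mathbb{R}$ with $\mathcal{E}^O\ge0$ and $\mathcal{E}^O(f_{ST})=0$ iff $\mathbb{P}_{ST}=\mathbb{P}_T$. An input transport risk $\mathcal{E}^I$ satisfies $\mathcal{E}^I(T^X_0)\ge0$, with equality iff $T^X_0\#Law(X_T)=Law(X_S)$. The model-specific transfer risk is $\mathcal{C}(S,T\mid f_{ST})=C(\mathcal{E}^O(f_{ST}),\mathcal{E}^I(T^X_0))$, with $C:\mathbb{R}^2\to\mathbb{R}$, $C(0,0)=0$, $C\ge0$ on relevant values, non-decreasing in each argument, and $|C(a,b)-C(a',b')|\le L_C(|a-a'|+|b-b'|)$ for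 some $L_C>0$. The transfer risk is $\mathcal{C}(S,T)=\inf_{(T^X_0,T^Y_0)\in\mathbb{T}^X_0\times\mathbb{T}^Y_0}\mathcal{C}(S,T\mid f_{ST})$. With target and transport sets fixed, a source task is $S=(\mu,f)\in\mathcal{P}(\mathcal{X}_S)\times A_S$ ($\mu=Law(X_S)$, $f=f_S^*$) and $\mathcal{C}(\mu,f):=\mathcal{C}(S,T)$. Assumption 1: $D$ is a metric on $\mathcal{P}(\mathcal{X}_S)$ and $\mathcal{E}^I(T^X_0)=D(T^X_0\#Law(X_T),\mu)$. For a fixed constant $M>0$, $d_M(f_1,f_2):=\min\{M,\sup_{x\in\mathcal{X}_S}\|f_1(x)-f_2(x)\|_{\mathcal{Y}_S}\}$ on $A_S$. $\mathcal{W}_p$ is the $p$-Wasserstein distance on probability measures on $\mathcal{Y}_T$ with finite $p$-th moment: $\mathcal{W}_p(\nu_1,\nu_2)^p=\inf_{\gamma\in\Pi(\nu_1,\nu_2)}\int\|x-y\|^p_{\mathcal{Y}_T}\,d\gamma(x,y)$. *)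

From HB Require Import structures.
From mathcomp Require Import all_boot all_order all_algebra.
From mathcomp Require Import all_classical all_reals all_analysis.
Set Implicit Arguments. Unset Strict Implicit. Unset Printing Implicit Defensive.
Import Order.TTheory GRing.Theory Num.Theory.
Import numFieldNormedType.Exports.
Local Open Scope classical_set_scope.
Local Open Scope ring_scope.

Definition findim (R : realType) (V : lmodType R) : Prop :=
  exists (n : nat) (b : 'I_n -> V),
    forall v : V, exists! c : 'I_n -> R, v = \sum_(i < n) c i *: b i.

Definition borelT (R : realType) (V : normedModType R) :=
  g_sigma_algebraType (@open V).

Definition same_law d (T : measurableType d) (R : realType)
  (m1 m2 : set T -> \bar R) : Prop :=
  forall A : set T, measurable A -> m1 A = m2 A.

Definition is_metric_on_prob d (T : measurableType d) (R : realType)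
  (D : (set T -> \bar R) -> (set T -> \bar R) -> R) : Prop :=
  (forall P Q : probability T R, 0 <= D P Q) /\
  (forall P Q : probability T R, D P Q = 0 <-> same_law P Q) /\
  (forall P Q : probability T R, D P Q = D Q P) /\
  (forall P Q S : probability T R, D P S <= D P Q + D Q S).

Definition couplings (R : realType) (V : normedModType R)
  (nu1 nu2 : set (borelT V) -> \bar R) :
  set (probability (borelT V * borelT V)%type R) :=
  [set g | (forall A : set (borelT V), measurable A -> g (A `*` setT) = nu1 A) /\
           (forall B : set (borelT V), measurable B -> g (setT `*` B) = nu2 B)].

(* W_p(nu1, nu2)^p = inf over couplings of \int |x - y|^p (extended real). *)
Definition Wpp (R : realType) (V : normedModType R) (p : R)
  (nu1 nu2 : set (borelT V) -> \bar R) : \bar R :=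
  ereal_inf [set (\int[g]_z ((`|(z.1 : V) - (z.2 : V)| `^ p)%:E))%E
            | g in couplings nu1 nu2].

Definition fST (R : realType) (XS XT YS YT : normedModType R)
  (TX : borelT XT -> borelT XS) (TY : (borelT XT * borelT YS)%type -> borelT YT)
  (f : borelT XS -> borelT YS) : borelT XT -> borelT YT :=
  fun x => TY (x, f (TX x)).

(* The transfer risk C(mu, f) = inf over transports of
   C(E^O(f_ST), D(T^X_0 # Law(X_T), mu))   (Assumption 1 for E^I). *)
Definition transfer_risk (R : realType) (XS XT YS YT : normedModType R)
  (C : R -> R -> R) (EO : (borelT XT -> borelT YT) -> R)
  (D : (set (borelT XS) -> \bar R) -> (set (borelT XS) -> \bar R) -> R)
  (PT : probability (borelT XT) R)
  (TXs : set (borelT XT -> borelT XS))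
  (TYs : set ((borelT XT * borelT YS)%type -> borelT YT))
  (mu : probability (borelT XS) R) (f : borelT XS -> borelT YS) : R :=
  inf [set C (EO (fST z.1 z.2 f)) (D (pushforward PT z.1) mu)
      | z in TXs `*` TYs].

Definition dM (R : realType) (XS YS : normedModType R) (M : R)
  (f1 f2 : borelT XS -> borelT YS) : R :=
  fine (Order.min M%:E
          (ereal_sup [set (`|(f1 x : YS) - (f2 x : YS)|)%:E | x in [set: XS]])).

From HB Require Import structures.
From mathcomp Require Import all_boot all_order all_algebra.
From mathcomp Require Import all_classical all_reals all_analysis.
From mathcomp Require Import measurable_realfun.
From mathcomp Require Import lra.
Import Order.TTheory GRing.Theory Num.Theory.
Import numFieldNormedType.Exports.
Local Open Scope classical_set_scope.
Local Open Scope ring_scope.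
Import HBNNSimple.

(* Fix transports (T^X_0, T^Y_0).  If d_M(f, g) = s < M then f and g are
   uniformly s-close, so the intermediate models f_ST and g_ST are uniformly
   (L s)-close by the Lipschitz property of T^Y_0.  Coupling Law(X_T) with
   itself along the diagonal bounds W_p(f_ST # P_T, g_ST # P_T)^p by (L s)^p,
   which is at most L s once L s <= 1; hence the output transport risks of f
   and g differ by at most L' L s.  The input transport risk does not depend
   on the pretrained model, so by the Lipschitz property of C every term of
   the infimum defining C(mu, .) moves by at most LC L' L s.  Finally, two
   families of reals that are uniformly K-close have infima that are K-close. *)

(* The diagonal coupling: if the transport cost between h1 x and h2 x is
   bounded by c for every x, then so is W_p^p between the pushforwards. *)
Lemma Wpp_pushforward_le (R : realType) d (T : measurableType d)
  (V : normedModType R) (P : probability T R) (h1 h2 : T -> borelT V)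
  (mh1 : measurable_fun setT h1) (mh2 : measurable_fun setT h2) (p c : R) :
  (forall x, `|(h1 x : V) - h2 x| `^ p <= c) ->
  (Wpp p (pushforward P h1) (pushforward P h2) <= c%:E)%E.
Proof.
move=> hc.
pose m := fun x => (h1 x, h2 x).
have mm : measurable_fun setT m by exact: measurable_fun_pair.
pose mX : {mfun T >-> (borelT V * borelT V)%type} :=
  HB.pack m (isMeasurableFun.Build _ _ _ _ _ mm).
pose g : probability _ R := distribution P mX.
have g_coupling : couplings (pushforward P h1) (pushforward P h2) g.
  by split=> A _; rewrite /g /distribution /pushforward /=; congr (P _);
     apply/seteqP; (split => x /=; [case|]).
apply: (@le_trans _ _ (\int[g]_z ((`|(z.1 : V) - (z.2 : V)| `^ p)%:E))%E).
  by apply: ereal_inf_lbound; exists g.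
rewrite ge0_integralTE; last by move=> z; rewrite lee_fin powR_ge0.
apply: ge_ereal_sup => _ [h /= hle <-].
have E := integral_nnsfun g measurableT h; rewrite patch_setT in E.
rewrite -E /g /distribution ge0_integral_pushforward//; last 2 first.
- by apply/measurable_EFinP.
- by move=> y _; rewrite lee_fin.
rewrite preimage_setT.
apply: (@le_trans _ _ (\int[P]_x (cst c%:E) x)%E).
  apply: ge0_le_integral => //.
  - by move=> x _; rewrite lee_fin.
  - by apply/measurable_EFinP; exact: measurableT_comp.
  - by move=> x _ /=; apply: le_trans (hle (m x)) _; rewrite lee_fin; exact: hc.
by rewrite integral_cst// [X in (_ * X)%E]probability_setT mule1.
Qed.

Lemma powR_le_self (R : realType) (a p : R) :
  0 <= a <= 1 -> 1 <= p -> a `^ p <= a.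
Proof.
case/andP=> a0 a1 p1.
have [->|anz] := eqVneq a 0; first by rewrite powR0 // gt_eqF // (lt_le_trans ltr01 p1).
by apply: ge1r_powR => //; rewrite lt_def anz a0.
Qed.

Lemma Wpp_pushforward_le_close (R : realType) d (T : measurableType d)
  (V : normedModType R) (P : probability T R) (h1 h2 : T -> borelT V)
  (mh1 : measurable_fun setT h1) (mh2 : measurable_fun setT h2) (p t : R) :
  1 <= p -> t <= 1 -> (forall x, `|(h1 x : V) - h2 x| <= t) ->
  (Wpp p (pushforward P h1) (pushforward P h2) <= t%:E)%E.
Proof.
move=> p1 t1 hclose; apply: Wpp_pushforward_le => // x.
apply: le_trans (hclose x); apply: powR_le_self => //.
by rewrite normr_ge0 (le_trans (hclose x) t1).
Qed.

Lemma has_inf_shift {R : realType} {I : Type} {S : set I} {u v : I -> R} {K : R} :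
  has_inf (u @` S) -> (forall z, S z -> u z - K <= v z) -> has_inf (v @` S).
Proof.
move=> [[_ [z0 Sz0 _]] [b hb]] huv; split; first by exists (v z0), z0.
exists (b - K) => _ [z Sz <-]; apply: le_trans (huv z Sz).
by rewrite lerD2r; apply: hb; exists z.
Qed.

Lemma inf_shift_le {R : realType} {I : Type} {S : set I} {u v : I -> R} {K : R} :
  has_inf (u @` S) -> (forall z, S z -> u z - K <= v z) ->
  inf (u @` S) - K <= inf (v @` S).
Proof.
move=> hu huv; have [vne _] := has_inf_shift hu huv.
apply: lb_le_inf => // _ [z Sz <-]; apply: le_trans (huv z Sz).
by rewrite lerD2r; apply: ge_inf; [case: hu | exists z].
Qed.

(* Uniformly K-close families of reals have K-close infima (with the
   convention inf = 0 for sets without an infimum). *)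
Lemma inf_image_close {R : realType} {I : Type} {S : set I} {u v : I -> R} {K : R} :
  0 <= K -> (forall z, S z -> `|u z - v z| <= K) ->
  `|inf (u @` S) - inf (v @` S)| <= K.
Proof.
move=> K0 huv.
have huv1 z : S z -> u z - K <= v z.
  by move/huv; rewrite ler_norml => /andP[_ h]; lra.
have huv2 z : S z -> v z - K <= u z.
  by move/huv; rewrite ler_norml => /andP[h _]; lra.
have [hu|hu] := pselect (has_inf (u @` S)).
  have a1 := inf_shift_le hu huv1.
  have a2 := inf_shift_le (has_inf_shift hu huv1) huv2.
  by rewrite ler_norml; apply/andP; split; lra.
have hv : ~ has_inf (v @` S) by move/(has_inf_shift ^~ huv2).
by rewrite !inf_out // subrr normr0.
Qed.

Lemma dM_pointwise {R : realType} {XS YS : normedModType R} {M : R}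
  {f g : borelT XS -> borelT YS} :
  dM M f g < M -> forall x, `|(f x : YS) - g x| <= dM M f g.
Proof.
rewrite /dM; set S := ereal_sup _ => hlt x.
have hx : ((`|(f x : YS) - g x|)%:E <= S)%E by apply: ereal_sup_ubound; exists x.
have [hMS|hSM] := leP (M%:E) S; first by move: hlt; rewrite min_l //= ltxx.
have Sfin : S \is a fin_num.
  rewrite fin_numE; apply/andP; split; apply/eqP => Sinf.
    by move: hx; rewrite Sinf leeNy_eq.
  by move: hSM; rewrite Sinf ltNge leey.
by rewrite -lee_fin fineK.
Qed.

Lemma fST_measurable (R : realType) (XS XT YS YT : normedModType R)
  (TX : borelT XT -> borelT XS) (TY : (borelT XT * borelT YS)%type -> borelT YT)
  (f : borelT XS -> borelT YS) :
  measurable_fun setT TX -> measurable_fun setT TY -> measurable_fun setT f ->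
  measurable_fun setT (fST TX TY f).
Proof.
move=> mTX mTY mf; apply: measurableT_comp mTY _.
exact: measurable_fun_pair (measurableT_comp mf mTX).
Qed.

Lemma fST_pointwise_close {R : realType} {XS XT YS YT : normedModType R}
  {TX : borelT XT -> borelT XS} {TY : (borelT XT * borelT YS)%type -> borelT YT}
  {f g : borelT XS -> borelT YS} {L s : R} :
  0 <= L ->
  (forall (x1 x2 : XT) (y1 y2 : YS),
     `|(TY (x1, y1) : YT) - TY (x2, y2)| <= L * (`|x1 - x2| + `|y1 - y2|)) ->
  (forall x, `|(f x : YS) - g x| <= s) ->
  forall x, `|(fST TX TY f x : YT) - fST TX TY g x| <= L * s.
Proof.
move=> L0 hTY hfg x; apply: le_trans (hTY _ _ _ _) _.
by rewrite subrr normr0 add0r ler_wpM2l.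
Qed.

Theorem mainTheorem3
  (R : realType) (XS XT YS YT : normedModType R)
  (* finite-dimensional normed spaces *)
  (hXS : findim XS) (hXT : findim XT) (hYS : findim YS) (hYT : findim YT)
  (* target task: Law(X_T), admissible models A_T, optimal target model f_T^* *)
  (PT : probability (borelT XT) R)
  (AT : set (borelT XT -> borelT YT)) (fT : borelT XT -> borelT YT)
  (hfT_AT : AT fT) (hfT_meas : measurable_fun setT fT)
  (* source admissible models (measurable) *)
  (AS : set (borelT XS -> borelT YS))
  (hAS_meas : forall f, AS f -> measurable_fun setT f)
  (* transport sets (measurable maps) *)
  (TXs : set (borelT XT -> borelT XS))
  (TYs : set ((borelT XT * borelT YS)%type -> borelT YT))
  (hTX_meas : forall TX, TXs TX -> measurable_fun setT TX)
  (hTY_meas : forall TY, TYs TY -> measurable_fun setT TY)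
  (* intermediate models are admissible target models *)
  (hfST_AT : forall TX TY f, TXs TX -> TYs TY -> AS f -> AT (fST TX TY f))
  (* output transport risk *)
  (EO : (borelT XT -> borelT YT) -> R)
  (hEO_ge0 : forall h, AT h -> 0 <= EO h)
  (hEO_0 : forall TX TY f, TXs TX -> TYs TY -> AS f ->
     (EO (fST TX TY f) = 0 <-> same_law (pushforward PT (fST TX TY f))
                                        (pushforward PT fT)))
  (* Assumption 1: E^I(T^X_0) = D(T^X_0 # Law(X_T), mu) with D a metric *)
  (D : (set (borelT XS) -> \bar R) -> (set (borelT XS) -> \bar R) -> R)
  (hD : is_metric_on_prob D)
  (* the function C *)
  (C : R -> R -> R) (LC : R) (hLC : 0 < LC)
  (hC00 : C 0 0 = 0)
  (hC_ge0 : forall a b, 0 <= a -> 0 <= b -> 0 <= C a b)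
  (hC_mon1 : forall a a' b, a <= a' -> C a b <= C a' b)
  (hC_mon2 : forall a b b', b <= b' -> C a b <= C a b')
  (hC_lip : forall a b a' b', `|C a b - C a' b'| <= LC * (`|a - a'| + `|b - b'|))
  (* Lipschitz transport maps T^Y_0 *)
  (L : R) (hL : 0 < L)
  (hTY_lip : forall TY, TYs TY -> forall (x1 x2 : XT) (y1 y2 : YS),
     `|(TY (x1, y1) : YT) - TY (x2, y2)| <= L * (`|x1 - x2| + `|y1 - y2|))
  (* output transport risk controlled by W_p^p *)
  (L' : R) (hL' : 0 < L') (p : R) (hp : 1 <= p)
  (hEO_W : forall TX1 TY1 f1 TX2 TY2 f2,
     TXs TX1 -> TYs TY1 -> AS f1 -> TXs TX2 -> TYs TY2 -> AS f2 ->
     ((`|EO (fST TX1 TY1 f1) - EO (fST TX2 TY2 f2)|)%:E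
       <= L'%:E * Wpp p (pushforward PT (fST TX1 TY1 f1))
                        (pushforward PT (fST TX2 TY2 f2)))%E)
  (* the constant M of d_M *)
  (M : R) (hM : 0 < M) :
  forall mu : probability (borelT XS) R,
  forall f, AS f -> forall eps : R, 0 < eps -> exists delta : R, 0 < delta /\
    forall g, AS g -> dM M f g < delta ->
      `|transfer_risk C EO D PT TXs TYs mu f
        - transfer_risk C EO D PT TXs TYs mu g| < eps.
Proof.
move=> mu f Af eps eps0.
have K0 : 0 < LC * L' * L by rewrite !mulr_gt0.
(* s = d_M(f, g) < delta ensures that s is the uniform distance (s < M),
   that L s <= 1 and that the final bound LC L' L s is below eps. *)
exists (Num.min M (Num.min L^-1 (eps / (LC * L' * L)))).
split; first by rewrite !lt_min hM invr_gt0 hL divr_gt0.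
move=> g Ag; rewrite !lt_min => /and3P[sM sL seps].
set s := dM M f g in sL seps *.
have hfg := dM_pointwise sM; rewrite -/s in hfg.
have s0 : 0 <= s := le_trans (normr_ge0 _) (hfg 0).
have Ls1 : L * s <= 1 by rewrite -(mulfV (lt0r_neq0 hL)) ler_wpM2l ?ltW.
have Keps : LC * L' * L * s < eps by rewrite mulrC -ltr_pdivlMr.
apply: le_lt_trans Keps; apply: inf_image_close; first by rewrite mulr_ge0 // ltW.
move=> [TX TY] [/= hTX hTY].
(* Only the output risk term depends on the pretrained model. *)
have hW : (Wpp p (pushforward PT (fST TX TY f)) (pushforward PT (fST TX TY g))
           <= (L * s)%:E)%E.
  apply: Wpp_pushforward_le_close => //.
  - exact: fST_measurable (hTX_meas _ hTX) (hTY_meas _ hTY) (hAS_meas _ Af).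
  - exact: fST_measurable (hTX_meas _ hTX) (hTY_meas _ hTY) (hAS_meas _ Ag).
  - exact: fST_pointwise_close (ltW hL) (hTY_lip _ hTY) hfg.
apply: le_trans (hC_lip _ _ _ _) _.
rewrite subrr normr0 addr0 -!mulrA ler_pM2l // -lee_fin EFinM.
apply: le_trans (hEO_W _ _ _ _ _ _ hTX hTY Af hTX hTY Ag) _.
by apply: lee_wpmul2l => //; rewrite lee_fin ltW.
Qed.
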